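(* Let $n\ge 2$ be an integer, $p,q\in\mathbb{R}$ with $q>0$, and let $M$ be a real $n\times n$ matrix such that each of the numbers $p, p+q, \dots, p+(n-1)q$ appears exactly $n$ times among the entries of $M$. Set $$r := \frac pq + \frac{n-1}{2},\quad \rho := \frac{n+1}{12},\quad \sigma := nq^2\left(r^2 + \frac{n^2-1}{12}\right).$$ Then: if $r^2 < \rho$: $|\det M| \le \sigma^{n/2}$; if $r^2 = \rho$: $|\det M| \le n^n q^n |r| \rho^{\frac{n-1}{2}} = \sigma^{n/2}$; if $r^2 > \rho$: $|\det M| \le n^n q^n |r| \rho^{\frac{n-1}{2}} < \sigma^{n/2}$. *)

(* Real numbers are modelled by an arbitrary real closed field
   R : rcfType; real powers x^(k/2) with x >= 0 are written (Num.sqrt x) ^+ k. *)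
From HB Require Import structures.
From mathcomp Require Import all_boot all_order all_algebra.
Set Implicit Arguments. Unset Strict Implicit. Unset Printing Implicit Defensive.
Import Order.TTheory GRing.Theory Num.Theory.
Local Open Scope ring_scope.

Definition r_of (R : rcfType) (n : nat) (p q : R) : R :=
  p / q + (n%:R - 1) / 2%:R.
Definition rho_of (R : rcfType) (n : nat) : R := (n%:R + 1) / 12%:R.
Definition sigma_of (R : rcfType) (n : nat) (p q : R) : R :=
  n%:R * q ^+ 2 * (r_of n p q ^+ 2 + (n%:R ^+ 2 - 1) / 12%:R).
Definition bound_of (R : rcfType) (n : nat) (p q : R) : R :=
  n%:R ^+ n * q ^+ n * `|r_of n p q| * (Num.sqrt (rho_of R n)) ^+ n.-1.

(* Put F := sum of the squared entries = n sigma and S := sum of the entries = n^2 q r;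
   both depend only on the multiset of entries.  Hadamard's inequality for the Gram
   matrix M^T M and AM-GM on its diagonal give det(M)^2 <= (F/n)^n = sigma^n.
   For the sharper bound, rotate M by an orthogonal matrix whose first column is the
   normalised all-ones vector.  The first diagonal entry X of the new Gram matrix is
   |row sums|^2 / n, so X >= (S/n)^2 =: Y by Cauchy-Schwarz, while Hadamard and AM-GM
   on the other diagonal entries give det(M)^2 <= X ((F - X)/(n-1))^(n-1).  This is
   nonincreasing in X as soon as X >= F/n, which is what r^2 >= rho guarantees, hence
   det(M)^2 <= Y ((F - Y)/(n-1))^(n-1), the square of the stated bound.  Comparing it
   with sigma^n is AM-GM for Y and n-1 copies of (F - Y)/(n-1), strict unless
   r^2 = rho. *)

From HB Require Import structures.
From mathcomp Require Import all_boot all_order all_algebra.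
From mathcomp Require Import ring lra.
Set Implicit Arguments. Unset Strict Implicit. Unset Printing Implicit Defensive.
Import Order.TTheory GRing.Theory Num.Theory.
Local Open Scope ring_scope.

Local Notation gram A := (A^T *m A).

Section Gram.
Variable R : realFieldType.

Lemma gram_diag m n (A : 'M[R]_(m, n)) j : gram A j j = \sum_i A i j ^+ 2.
Proof. by rewrite mxE; apply: eq_bigr => i _; rewrite mxE expr2. Qed.

Lemma gram_diag_ge0 m n (A : 'M[R]_(m, n)) j : 0 <= gram A j j.
Proof. by rewrite gram_diag; apply: sumr_ge0 => i _; apply: sqr_ge0. Qed.

Lemma mxtrace_gram n (A : 'M[R]_n) :
  \tr (gram A) = \sum_(ij : 'I_n * 'I_n) A ij.1 ij.2 ^+ 2.
Proof.
by rewrite /mxtrace; under eq_bigr do rewrite gram_diag; rewrite exchange_big pair_bigA.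
Qed.

Lemma gram_addr_orth m n (B C : 'M[R]_(m, n)) :
  B^T *m C = 0 -> gram (B + C) = gram B + gram C.
Proof.
move=> BC; rewrite mulmxDr [(B + C)^T]linearD !mulmxDl BC.
by rewrite -[C^T *m B]trmxK trmx_mul trmxK BC trmx0 addr0 add0r.
Qed.

Lemma gram_row_mx_orth m n (a : 'cV[R]_m) (B : 'M_(m, n)) :
  a^T *m B = 0 -> gram (row_mx a B) = block_mx (gram a) 0 0 (gram B).
Proof.
move=> aB; rewrite tr_row_mx mul_col_row aB.
by rewrite -[B^T *m a]trmxK trmx_mul trmxK aB trmx0.
Qed.

Lemma det_gram_shear m n (a : 'cV[R]_m) (B : 'M_(m, n)) (w : 'rV_n) :
  \det (gram (row_mx a (B + a *m w))) = \det (gram (row_mx a B)).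
Proof.
have -> : row_mx a (B + a *m w) = row_mx a B *m block_mx 1%:M w 0 1%:M.
  by rewrite mul_row_block !mulmx1 !mulmx0 addr0 addrC.
rewrite trmx_mul mulmxA -[_ *m _ *m row_mx a B]mulmxA !det_mulmx det_tr det_ublock.
by rewrite !det1 !mul1r mulr1.
Qed.

Lemma exists_orth_shear m n (a : 'cV[R]_m) (B : 'M_(m, n)) :
  exists w : 'rV_n, a^T *m (B - a *m w) = 0.
Proof.
set c := gram a 0 0.
have ac : gram a = c%:M by apply/matrixP => i j; rewrite !ord1 [RHS]mxE eqxx mulr1n.
have [c0|c0] := eqVneq c 0; last first.
  exists (c^-1 *: (a^T *m B)).
  by rewrite mulmxBr mulmxA ac -scalemxAr mul_scalar_mx scalerA mulVf // scale1r subrr.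
have -> : a = 0.
  apply/matrixP => i j; rewrite ord1 mxE; move/eqP: c0.
  rewrite /c gram_diag psumr_eq0 => [/allP/(_ i (mem_index_enum _))|k _]; last exact: sqr_ge0.
  by rewrite sqrf_eq0 => /eqP.
by exists 0; rewrite trmx0 mul0mx.
Qed.

Lemma gram_row_mx_diagl m n (a : 'cV[R]_m) (B : 'M_(m, n)) :
  gram (row_mx a B) (lshift n 0) (lshift n 0) = gram a 0 0.
Proof. by rewrite !gram_diag; under eq_bigr do rewrite row_mxEl. Qed.

Lemma gram_row_mx_diagr m n (a : 'cV[R]_m) (B : 'M_(m, n)) j :
  gram (row_mx a B) (rshift 1 j) (rshift 1 j) = gram B j j.
Proof. by rewrite !gram_diag; under eq_bigr do rewrite row_mxEr. Qed.

Lemma det_gram_le_prod_diag m n (A : 'M[R]_(m, n)) :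
  \det (gram A) <= \prod_j gram A j j.
Proof.
elim: n A => [|n IH] A; first by rewrite det_mx00 big_ord0.
rewrite -[A](hsubmxK (A : 'M_(m, 1 + n))); move: (lsubmx _) (rsubmx _) => a B.
have [w aB'] := exists_orth_shear a B.
have -> : B = (B - a *m w) + a *m w by rewrite subrK.
move: (B - a *m w) aB' => {}B aB.
rewrite det_gram_shear gram_row_mx_orth // det_ublock det_mx11.
rewrite (@big_split_ord _ _ _ 1 n) big_ord1 /= gram_row_mx_diagl.
apply: ler_wpM2l; first exact: gram_diag_ge0.
apply: le_trans (IH B) _; apply: ler_prod => j _; rewrite gram_diag_ge0 gram_row_mx_diagr.
have BaW : B^T *m (a *m w) = 0.
  by rewrite mulmxA -[B^T *m a]trmxK trmx_mul trmxK aB trmx0 mul0mx.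
by rewrite gram_addr_orth // [X in _ <= X]mxE lerDl gram_diag_ge0.
Qed.

Lemma prod_le_mean_expr (I : finType) (E : I -> R) : (forall i, 0 <= E i) ->
  \prod_i E i <= ((\sum_i E i) / #|I|%:R) ^+ #|I|.
Proof. by move=> E0; have [] := @leif_AGM _ _ predT E (fun i _ => E0 i). Qed.

Lemma det_gram_le_mean n (A : 'M[R]_n) :
  \det (gram A) <= (\tr (gram A) / n%:R) ^+ n.
Proof.
apply: le_trans (det_gram_le_prod_diag A) _.
by have := prod_le_mean_expr (fun j => gram_diag_ge0 A j); rewrite card_ord.
Qed.

Lemma sqr_det_le_mean_sqr n (M : 'M[R]_n) :
  \det M ^+ 2 <= ((\sum_(ij : 'I_n * 'I_n) M ij.1 ij.2 ^+ 2) / n%:R) ^+ n.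
Proof. by rewrite -mxtrace_gram expr2 -{1}det_tr -det_mulmx; exact: det_gram_le_mean. Qed.

Lemma det_gram_le_head m k (A : 'M[R]_(m, k.+2)) :
  \det (gram A) <= gram A 0 0 * ((\tr (gram A) - gram A 0 0) / k.+1%:R) ^+ k.+1.
Proof.
apply: le_trans (det_gram_le_prod_diag A) _; rewrite big_ord_recl.
apply: ler_wpM2l; first exact: gram_diag_ge0.
have := prod_le_mean_expr (fun j : 'I_k.+1 => gram_diag_ge0 A (lift ord0 j)).
suff -> : \tr (gram A) - gram A 0 0 = \sum_(j < k.+1) gram A (lift ord0 j) (lift ord0 j).
  by rewrite card_ord.
by rewrite /mxtrace big_ord_recl (_ : 0 = ord0) // addrAC subrr add0r.
Qed.

Lemma sqr_sum_le n (v : 'I_n -> R) : (\sum_i v i) ^+ 2 <= n%:R * \sum_i v i ^+ 2.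
Proof.
case: n v => [|n] v; first by rewrite !big_ord0 expr0n /= mul0r.
set N : R := n.+1%:R; set T := \sum_i v i.
have : 0 <= \sum_(i < n.+1) (N * v i - T) ^+ 2 by apply: sumr_ge0 => i _; apply: sqr_ge0.
have -> : \sum_(i < n.+1) (N * v i - T) ^+ 2 = N * (N * \sum_i v i ^+ 2 - T ^+ 2).
  rewrite (eq_bigr (fun i => N ^+ 2 * v i ^+ 2 + - (2 * N * T) * v i + T ^+ 2)).
    by rewrite !big_split /= -!mulr_sumr sumr_const card_ord -/T -/N -mulr_natr; ring.
  by move=> i _; ring.
by rewrite pmulr_rge0 ?ltr0Sn // subr_ge0.
Qed.

End Gram.

Section Tangent.
Variable R : realFieldType.

Lemma expr_tangent_le k (a b : R) : 0 <= a -> a <= b ->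
  a ^+ k.+1 + k.+1%:R * (b - a) * a ^+ k <= b ^+ k.+1.
Proof.
move=> a0 ab; elim: k => [|k IH]; first by rewrite !expr1 expr0 mulr1 mul1r; lra.
have b0 : 0 <= b by apply: le_trans ab.
have ak0 : 0 <= a ^+ k by apply: exprn_ge0.
rewrite [b ^+ k.+2]exprS; apply: le_trans (ler_wpM2l b0 IH).
rewrite !exprS -[k.+2%:R]natr1 -[k.+1%:R]natr1.
have k0 : 0 <= k%:R :> R by apply: ler0n.
have h1 : 0 <= (b - a) * (b - a) * a ^+ k by rewrite mulr_ge0 ?mulr_ge0 ?subr_ge0.
have h2 : 0 <= k%:R * ((b - a) * (b - a) * a ^+ k) by apply: mulr_ge0.
nra.
Qed.

Lemma expr_tangent_lt k (a b : R) : 0 < a -> a < b ->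
  a ^+ k.+2 + k.+2%:R * (b - a) * a ^+ k.+1 < b ^+ k.+2.
Proof.
move=> a0 ab; have b0 : 0 < b by apply: lt_trans ab.
have ak0 : 0 < a ^+ k by apply: exprn_gt0.
have IH := expr_tangent_le k (ltW a0) (ltW ab).
rewrite [b ^+ k.+2]exprS; apply: lt_le_trans (ler_wpM2l (ltW b0) IH).
rewrite !exprS -[k.+2%:R]natr1 -[k.+1%:R]natr1.
have k0 : 0 <= k%:R :> R by apply: ler0n.
have h1 : 0 < (b - a) * (b - a) * a ^+ k by rewrite mulr_gt0 ?mulr_gt0 ?subr_gt0.
have h2 : 0 <= k%:R * ((b - a) * (b - a) * a ^+ k) by rewrite mulr_ge0 // ltW.
nra.
Qed.

(* A two-point form of: x |-> x (F - x)^(k+1) is nonincreasing on [F / (k + 2), F]. *)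
Lemma mul_expr_compl_le k (F X Y : R) : 0 <= Y -> Y <= X ->
  0 <= F - X -> F - X <= k.+1%:R * Y -> X * (F - X) ^+ k.+1 <= Y * (F - Y) ^+ k.+1.
Proof.
move=> Y0 YX FX0 FXY.
have := expr_tangent_le k FX0 (_ : F - X <= F - Y); rewrite lerD2l lerN2 => /(_ YX).
move=> /(ler_wpM2l Y0); apply: le_trans.
have -> : F - Y - (F - X) = X - Y by ring.
have h : 0 <= (X - Y) * (F - X) ^+ k by rewrite mulr_ge0 ?subr_ge0 ?exprn_ge0.
have := ler_wpM2r h FXY; rewrite exprS; nra.
Qed.

Lemma mul_expr_lt_mean k (Y Z : R) : 0 < Z -> Z < Y ->
  Y * Z ^+ k.+1 < ((Y + k.+1%:R * Z) / k.+2%:R) ^+ k.+2.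
Proof.
move=> Z0 ZY; set b := (Y + k.+1%:R * Z) / k.+2%:R.
have Zb : Z < b by rewrite ltr_pdivlMr ?ltr0Sn // -[k.+2%:R]natr1; nra.
suff -> : Y * Z ^+ k.+1 = Z ^+ k.+2 + k.+2%:R * (b - Z) * Z ^+ k.+1.
  exact: expr_tangent_lt.
by rewrite /b !exprS -[k.+2%:R]natr1 -[k.+1%:R]natr1; field; rewrite !natr1 pnatr_eq0.
Qed.

End Tangent.

Lemma sum_arith_prog (R : numFieldType) n (p q : R) :
  \sum_(k < n) (p + k%:R * q) = n%:R * (p + (n%:R - 1) / 2 * q).
Proof.
elim: n => [|n IH]; first by rewrite big_ord0 mul0r.
by rewrite big_ord_recr /= IH -natr1; field.
Qed.

Lemma sum_sqr_arith_prog (R : numFieldType) n (p q : R) :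
  \sum_(k < n) (p + k%:R * q) ^+ 2 =
  n%:R * ((p + (n%:R - 1) / 2 * q) ^+ 2 + (n%:R ^+ 2 - 1) / 12 * q ^+ 2).
Proof.
elim: n => [|n IH]; first by rewrite big_ord0 mul0r.
by rewrite big_ord_recr /= IH -natr1; field.
Qed.

(* The Householder reflection exchanging e_0 with the normalised all-ones vector. *)
Lemma exists_orthogonal_const_col (R : rcfType) m : exists H : 'M[R]_m.+2,
  H^T *m H = 1%:M /\ forall i, H i 0 = (Num.sqrt m.+2%:R)^-1.
Proof.
set N : R := m.+2%:R; set s := Num.sqrt N.
have N2 : 2 <= N by rewrite /N ler_nat.
have sN : s ^+ 2 = N by rewrite sqr_sqrtr //; lra.
have s0 : 0 <= s := sqrtr_ge0 N.
have s1 : 1 < s by nra.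
pose c : R := 2 * s ^+ 2 - 2 * s.
have c0 : c != 0 by apply/eqP; rewrite /c; nra.
pose w : 'cV[R]_m.+2 := \col_i (1 - s * (i == 0)%:R).
have wc : w^T *m w = c%:M.
  apply/matrixP => i j; rewrite !ord1 !mxE /= big_ord_recl /=.
  under eq_bigr do rewrite !mxE /=.
  have hm : m.+1%:R = s ^+ 2 - 1 :> R by rewrite sN /N -[m.+2%:R]natr1 addrK.
  by rewrite !mxE /= !mulr0 !subr0 !mulr1 sumr_const card_ord hm mulr1n /c; ring.
pose W := w *m w^T; pose t := 2 / c.
have WW : W *m W = c *: W.
  by rewrite /W mulmxA -[w *m w^T *m w]mulmxA wc mul_mx_scalar -scalemxAl.
pose H := 1%:M - t *: W.
have HT : H^T = H.
  apply/matrixP => i j; rewrite !mxE !big_ord1 !mxE eq_sym; congr (_ - _ * _).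
  exact: mulrC.
exists H; split.
  rewrite HT /H !mulmxBl !mulmxBr !mul1mx !mulmx1 -scalemxAl -scalemxAr WW !scalerA.
  rewrite (_ : t * t * c = t + t) /t; last by field.
  by rewrite scalerDl opprB addrK subrK.
have sn0 : s != 0 by apply/eqP; lra.
move=> i; rewrite /H !mxE big_ord1 !mxE /=.
by case: (i == 0); rewrite /t /c /= ?mulr1 ?mulr0 ?subr0 ?mul1r ?sub0r; field; rewrite sn0.
Qed.

Lemma entries_in_values (T : eqType) n (v : 'I_n -> T) (M : 'M[T]_n) :
  injective v -> (forall k, #|[set ij | M ij.1 ij.2 == v k]| = n) ->
  forall ij : 'I_n * 'I_n, exists k, M ij.1 ij.2 = v k.
Proof.
(* Every position carries at most one of the n distinct values, and the n value
   classes of size n already account for all n^2 positions. *)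
move=> v_inj hM.
pose K (ij : 'I_n * 'I_n) := [set k | M ij.1 ij.2 == v k].
have K_le1 ij : (#|K ij| <= 1)%N.
  by apply/card_le1_eqP => k k'; rewrite !inE => /eqP-> /eqP/v_inj.
have K_sum : (\sum_ij #|K ij| = n * n)%N.
  transitivity (\sum_ij \sum_k (M ij.1 ij.2 == v k : nat))%N.
    apply: eq_bigr => ij _; rewrite -sum1_card big_mkcond.
    by apply: eq_bigr => k _; rewrite inE.
  rewrite exchange_big /= (_ : (n * n = \sum_(k < n) n)%N); last first.
    by rewrite sum_nat_const card_ord.
  apply: eq_bigr => k _; rewrite -[in RHS](hM k) -sum1_card [RHS]big_mkcond.
  by apply: eq_bigr => ij _; rewrite inE.
have K1 ij : #|K ij| = 1%N.
  have : (\sum_ij (1 - #|K ij|) = 0)%N.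
    by rewrite sumnB // sum_nat_const card_prod card_ord K_sum muln1 subnn.
  move/eqP; rewrite sum_nat_eq0 => /forallP /(_ ij); rewrite subn_eq0 => K_ge1.
  by apply/eqP; rewrite eqn_leq K_le1.
move=> ij; have /card_gt0P [k] : (0 < #|K ij|)%N by rewrite K1.
by rewrite inE => /eqP; exists k.
Qed.

Lemma sum_entries_of_counts (T : eqType) (V : nmodType) (f : T -> V) n (v : 'I_n -> T)
    (M : 'M[T]_n) :
  injective v -> (forall k, #|[set ij | M ij.1 ij.2 == v k]| = n) ->
  \sum_(ij : 'I_n * 'I_n) f (M ij.1 ij.2) = (\sum_k f (v k)) *+ n.
Proof.
move=> v_inj hM; have cover := entries_in_values v_inj hM.
transitivity (\sum_ij \sum_(k | M ij.1 ij.2 == v k) f (v k)).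
  apply: eq_bigr => ij _; have [k0 ->] := cover ij.
  by rewrite (big_pred1 k0) // => k; rewrite /= (inj_eq v_inj) eq_sym.
rewrite (exchange_big_dep xpredT) //= -sumrMnl; apply: eq_bigr => k _.
by rewrite -[in RHS](hM k) -sumr_const; apply: eq_bigl => ij; rewrite inE.
Qed.

Lemma sqr_det_le_sum_bound (R : rcfType) m (M : 'M[R]_m.+2) (Y Z : R) :
  ((\sum_(ij : 'I_m.+2 * 'I_m.+2) M ij.1 ij.2) / m.+2%:R) ^+ 2 = Y ->
  \sum_(ij : 'I_m.+2 * 'I_m.+2) M ij.1 ij.2 ^+ 2 = Y + m.+1%:R * Z ->
  Z <= Y -> \det M ^+ 2 <= Y * Z ^+ m.+1.
Proof.
set N : R := m.+2%:R; set S := \sum_ij M ij.1 ij.2; set F := Y + m.+1%:R * Z.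
move=> hS hF ZY; have N0 : 0 < N by apply: ltr0Sn.
have [H [HH H0]] := exists_orthogonal_const_col R m.
pose A := M *m H; set X := gram A 0 0.
have gramA : gram A = H^T *m gram M *m H by rewrite trmx_mul !mulmxA.
have detA : \det (gram A) = \det M ^+ 2.
  rewrite gramA det_mulmx det_mulmx mulrAC -det_mulmx HH det1 mul1r.
  by rewrite det_mulmx det_tr expr2.
have trA : \tr (gram A) = F.
  by rewrite gramA -mulmxA mxtrace_mulC -(mulmxA (gram M)) (mulmx1C HH) mulmx1 mxtrace_gram.
have XF : X <= F.
  rewrite -trA /mxtrace (bigD1 0) //= lerDl.
  by apply: sumr_ge0 => j _; apply: gram_diag_ge0.
have YX : Y <= X.
  set s := Num.sqrt N in H0; have sN : s ^+ 2 = N by rewrite sqr_sqrtr // ltW.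
  have sumA : \sum_i A i 0 = S / s.
    rewrite /S -pair_bigA mulr_suml /=; apply: eq_bigr => i _.
    by rewrite mxE mulr_suml; apply: eq_bigr => j _; rewrite H0.
  have := sqr_sum_le (fun i => A i 0); rewrite sumA -/N expr_div_n sN -gram_diag -/X.
  rewrite -hS expr_div_n !ler_pdivrMr ?exprn_gt0 //; nra.
have Y0 : 0 <= Y by rewrite -hS sqr_ge0.
have := det_gram_le_head A; rewrite detA trA -/X => /le_trans; apply.
have -> : Z = (F - Y) / m.+1%:R by rewrite /F addrC addKr mulrC mulKf ?pnatr_eq0.
rewrite !expr_div_n !mulrA ler_pM2r ?invr_gt0 ?exprn_gt0 ?ltr0Sn //.
apply: mul_expr_compl_le => //; first by rewrite subr_ge0.
have := ler_wpM2l (ler0n R m.+1) ZY; rewrite /F; lra.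
Qed.

Section ArithmeticEntries.
Variables (R : rcfType) (n : nat) (p q : R) (M : 'M[R]_n).
Hypothesis q0 : q != 0.
Hypothesis hM : forall k : 'I_n,
  #|[set ij : 'I_n * 'I_n | M ij.1 ij.2 == p + k%:R * q]| = n.

Let qr : q * r_of n p q = p + (n%:R - 1) / 2 * q.
Proof. by rewrite /r_of; field. Qed.

Let arith_inj : injective (fun k : 'I_n => p + k%:R * q).
Proof. by move=> k k' /addrI /(mulIf q0) /eqP; rewrite eqr_nat => /eqP /val_inj. Qed.

Lemma sum_arith_entries : \sum_(ij : 'I_n * 'I_n) M ij.1 ij.2 = n%:R ^+ 2 * q * r_of n p q.
Proof.
rewrite (sum_entries_of_counts id arith_inj hM) -[LHS]mulr_natl sum_arith_prog -qr.
by rewrite mulrA -expr2 mulrA.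
Qed.

Lemma sum_sqr_arith_entries :
  \sum_(ij : 'I_n * 'I_n) M ij.1 ij.2 ^+ 2 = n%:R * sigma_of n p q.
Proof.
rewrite (sum_entries_of_counts (fun x => x ^+ 2) arith_inj hM) -[LHS]mulr_natl.
by rewrite sum_sqr_arith_prog -qr /sigma_of; congr (_ * _); ring.
Qed.

End ArithmeticEntries.

Lemma mulr_sigma_ofE (R : rcfType) n (p q : R) :
  n%:R * sigma_of n p q = n%:R ^+ 2 * q ^+ 2 * r_of n p q ^+ 2
                          + (n%:R - 1) * (n%:R ^+ 2 * q ^+ 2 * rho_of R n).
Proof. by rewrite /sigma_of /rho_of; field. Qed.

Lemma sqr_bound_shape (R : comPzRingType) k (N q a t : R) :
  (N ^+ k.+1 * q ^+ k.+1 * a * t ^+ k) ^+ 2 =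
  (N ^+ 2 * q ^+ 2 * a ^+ 2) * (N ^+ 2 * q ^+ 2 * t ^+ 2) ^+ k.
Proof.
by rewrite !exprMn -!exprM !(mulnC _ 2) !mulnS !exprD; ring.
Qed.

Lemma sqr_bound_of (R : rcfType) m (p q : R) :
  bound_of m.+1 p q ^+ 2 =
  m.+1%:R ^+ 2 * q ^+ 2 * r_of m.+1 p q ^+ 2 * (m.+1%:R ^+ 2 * q ^+ 2 * rho_of R m.+1) ^+ m.
Proof.
have rho0 : 0 <= rho_of R m.+1 by rewrite divr_ge0 ?addr_ge0 ?ler0n.
by rewrite /bound_of sqr_bound_shape sqr_sqrtr // real_normK ?num_real.
Qed.

Lemma bound_of_ge0 (R : rcfType) n (p q : R) : 0 <= q -> 0 <= bound_of n p q.
Proof. by move=> q0; rewrite /bound_of !mulr_ge0 ?exprn_ge0 ?sqrtr_ge0 ?ler0n. Qed.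

Theorem mainTheorem9 (R : rcfType) (n : nat) (hn : (2 <= n)%N) (p q : R)
  (hq : 0 < q) (M : 'M[R]_n)
  (hM : forall k : 'I_n,
     #|[set ij : 'I_n * 'I_n | M ij.1 ij.2 == p + k%:R * q]| = n) :
  let r := r_of n p q in
  let rho := rho_of R n in
  let sigma := sigma_of n p q in
  [/\ r ^+ 2 < rho -> `|\det M| <= Num.sqrt sigma ^+ n,
      r ^+ 2 = rho ->
        `|\det M| <= bound_of n p q /\ bound_of n p q = Num.sqrt sigma ^+ n
    & rho < r ^+ 2 ->
        `|\det M| <= bound_of n p q /\ bound_of n p q < Num.sqrt sigma ^+ n].
Proof.
case: n hn M hM => [|[|m]] // _ M hM r rho sigma; set N : R := m.+2%:R.
have N0 : 0 < N by apply: ltr0Sn.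
have q0 : q != 0 := lt0r_neq0 hq.
have k1 : m.+1%:R = N - 1 by rewrite /N -[m.+2%:R]natr1 addrK.
pose Y := N ^+ 2 * q ^+ 2 * r ^+ 2; pose Z := N ^+ 2 * q ^+ 2 * rho.
have hS : ((\sum_ij M ij.1 ij.2) / N) ^+ 2 = Y.
  by rewrite (sum_arith_entries q0 hM) -/N -/r /Y; field; rewrite -natrD pnatr_eq0.
have hF : \sum_ij M ij.1 ij.2 ^+ 2 = Y + m.+1%:R * Z.
  by rewrite (sum_sqr_arith_entries q0 hM) mulr_sigma_ofE k1.
have sigmaE : sigma = (Y + m.+1%:R * Z) / N.
  by rewrite -hF (sum_sqr_arith_entries q0 hM) mulrC mulKf ?gt_eqF.
have Nq0 : 0 < N ^+ 2 * q ^+ 2 by rewrite mulr_gt0 ?exprn_gt0.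
have Z0 : 0 < Z by rewrite mulr_gt0 // divr_gt0 ?addr_gt0.
have Y0 : 0 <= Y by rewrite -hS sqr_ge0.
have sigma0 : 0 <= sigma.
  by rewrite sigmaE divr_ge0 ?(ltW N0) // addr_ge0 // mulr_ge0 ?ler0n ?(ltW Z0).
have sqrt_sigma : (Num.sqrt sigma ^+ m.+2) ^+ 2 = sigma ^+ m.+2 by rewrite exprAC sqr_sqrtr.
have det_bound : rho <= r ^+ 2 -> `|\det M| <= bound_of m.+2 p q.
  move=> rr; rewrite -ler_sqr ?nnegrE ?bound_of_ge0 ?(ltW hq) // real_normK ?num_real //.
  by rewrite sqr_bound_of; apply: sqr_det_le_sum_bound hS hF _; rewrite ler_pM2l.
split => [_ | rr | rr].
- rewrite -ler_sqr ?nnegrE ?exprn_ge0 ?sqrtr_ge0 // real_normK ?num_real // sqrt_sigma.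
  by rewrite sigmaE -hF; apply: sqr_det_le_mean_sqr.
- split; first by apply: det_bound; rewrite rr.
  apply/eqP; rewrite -(eqrXn2 (_ : 0 < 2)%N) ?bound_of_ge0 ?exprn_ge0 ?sqrtr_ge0 ?(ltW hq) //.
  rewrite sqrt_sigma sqr_bound_of sigmaE -/N -/r -/rho -/Y -/Z (_ : Y = Z); last by rewrite /Y rr.
  by rewrite (_ : (Z + m.+1%:R * Z) / N = Z) ?exprS //; field; rewrite -natrD pnatr_eq0.
- split; first by apply: det_bound; apply: ltW.
  rewrite -ltr_sqr ?nnegrE ?bound_of_ge0 ?exprn_ge0 ?sqrtr_ge0 ?(ltW hq) //.
  rewrite sqrt_sigma sqr_bound_of sigmaE -/N -/r -/rho -/Y -/Z.
  by apply: mul_expr_lt_mean => //; rewrite ltr_pM2l.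
Qed.
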